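(* Let $F$ be a field, $n\ge3$, and let $x\mapsto\bar x$ be either the identity map of $F$ or a field automorphism of $F$ of order $2$ (applied entrywise to matrices). Let $G$ be the set of block matrices $\begin{pmatrix}a&b\\c&d\end{pmatrix}\in\mathrm{SL}_{2n}(F)$ ($n\times n$ blocks) satisfying $$a\bar d^T+b\bar c^T=1_n,\quad a\bar b^T+b\bar a^T=0,\quad c\bar d^T+d\bar c^T=0.$$ Let $V=\left\{\begin{pmatrix}1&k\\0&1\end{pmatrix}:\bar k^T=-k\right\}$, $V^T=\left\{\begin{pmatrix}1&0\\k&1\end{pmatrix}:\bar k^T=-k\right\}$ and $H=\left\{\begin{pmatrix}a^{-1}&0\\0&\bar a^T\end{pmatrix}:a\in\mathrm{GL}_n(F)\right\}$. Then $G=VV^TV(H\cap G)$. *)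

From HB Require Import structures.
From mathcomp Require Import all_boot all_order all_algebra.
Set Implicit Arguments. Unset Strict Implicit. Unset Printing Implicit Defensive.
Import Order.TTheory GRing.Theory Num.Theory.
Local Open Scope ring_scope.

Section Defs.
Variable (F : fieldType) (s : {rmorphism F -> F}) (n : nat).

Definition conjT m p (a : 'M[F]_(m, p)) : 'M[F]_(p, m) := (map_mx s a)^T.

Definition inG (g : 'M[F]_(n + n)) : Prop :=
  let a := ulsubmx g in let b := ursubmx g in
  let c := dlsubmx g in let d := drsubmx g in
  [/\ \det g = 1,
      a *m conjT d + b *m conjT c = 1%:M,
      a *m conjT b + b *m conjT a = 0 &
      c *m conjT d + d *m conjT c = 0].

Definition inV (v : 'M[F]_(n + n)) : Prop :=
  exists k : 'M[F]_n, conjT k = - k /\ v = block_mx 1%:M k 0 1%:M.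

Definition inVT (v : 'M[F]_(n + n)) : Prop :=
  exists k : 'M[F]_n, conjT k = - k /\ v = block_mx 1%:M 0 k 1%:M.

Definition inH (h : 'M[F]_(n + n)) : Prop :=
  exists a : 'M[F]_n, a \in unitmx /\ h = block_mx (invmx a) 0 0 (conjT a).

End Defs.

(* G is the group of matrices g with det g = 1 and g J g^* = J, where J = [[0, 1], [1, 0]]
   and ^* is the conjugate transpose. If some skew-hermitian k makes a - k c invertible, then
   [[1, -k], [0, 1]] g has an invertible upper-left block, and block Gaussian elimination
   inside G writes it as an element of V^T V (H /\ G). To find k, write c = P D Q with
   D = pid_mx r and E = 1 - D: the isotropy relation c^* a + a^* c = 0 lets one make a - k c
   equal, up to invertible factors, to E a E + T for every skew-hermitian T supported and
   nondegenerate on the first r coordinates, and E a E + T is invertible because the first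
   block column of g is injective. Such a T is t D when some t <> 0 has conjugate -t;
   otherwise the involution is trivial, the characteristic is not 2, and T must pair the
   first r coordinates symplectically, which needs r even. That is where det g = 1 enters:
   such isometries have det g = (-1)^(rank c). *)

From HB Require Import structures.
From mathcomp Require Import all_boot all_order all_algebra.
Import GRing.Theory.
Local Open Scope ring_scope.

Lemma unitmx_rker0 (F : fieldType) n (M : 'M[F]_n) :
  (forall X : 'M_n, M *m X = 0 -> X = 0) -> M \in unitmx.
Proof.
move=> Mx0; rewrite -unitmx_tr -row_free_unit -kermx_eq0; apply/eqP.
rewrite -[kermx M^T]trmxK (Mx0 (kermx M^T)^T) ?trmx0 //.
by rewrite -{1}[M]trmxK -trmx_mul mulmx_ker trmx0.
Qed.

Section Isometry.
Set Implicit Arguments.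
Unset Strict Implicit.

Variables (F : fieldType) (s : {rmorphism F -> F}).
Hypothesis sK : involutive s.
Local Notation ct := (conjT s).

Lemma conjTK m p (A : 'M[F]_(m, p)) : ct (ct A) = A.
Proof.
rewrite /conjT map_trmx trmxK -map_mx_comp.
by apply/matrixP=> i j; rewrite !mxE /= sK.
Qed.

Lemma conjTM m p q (A : 'M[F]_(m, p)) (B : 'M[F]_(p, q)) : ct (A *m B) = ct B *m ct A.
Proof. by rewrite /conjT map_mxM trmx_mul. Qed.

Lemma conjTD m p (A B : 'M[F]_(m, p)) : ct (A + B) = ct A + ct B.
Proof. by rewrite /conjT map_mxD linearD. Qed.

Lemma conjTN m p (A : 'M[F]_(m, p)) : ct (- A) = - ct A.
Proof. by rewrite /conjT map_mxN linearN. Qed.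

Lemma conjT0 m p : ct (0 : 'M[F]_(m, p)) = 0.
Proof. by rewrite /conjT map_mx0 trmx0. Qed.

Lemma conjT1 m : ct (1%:M : 'M[F]_m) = 1%:M.
Proof. by rewrite /conjT map_mx1 trmx1. Qed.

Lemma conjTZ m p x (A : 'M[F]_(m, p)) : ct (x *: A) = s x *: ct A.
Proof. by rewrite /conjT map_mxZ linearZ. Qed.

Lemma conjT_block m1 m2 n1 n2 (a : 'M[F]_(m1, n1)) (b : 'M[F]_(m1, n2))
    (c : 'M[F]_(m2, n1)) (d : 'M[F]_(m2, n2)) :
  ct (block_mx a b c d) = block_mx (ct a) (ct c) (ct b) (ct d).
Proof. by rewrite /conjT map_block_mx tr_block_mx. Qed.

Lemma conjT_pid m r : ct (pid_mx r : 'M[F]_m) = pid_mx r.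
Proof. by rewrite /conjT map_pid_mx tr_pid_mx. Qed.

Lemma conjT_invmx m (A : 'M[F]_m) : ct (invmx A) = invmx (ct A).
Proof. by rewrite /conjT map_invmx trmx_inv. Qed.

Lemma unitmx_conjT m (A : 'M[F]_m) : (ct A \in unitmx) = (A \in unitmx).
Proof. by rewrite /conjT unitmx_tr map_unitmx. Qed.

Lemma det_conjT m (A : 'M[F]_m) : \det (ct A) = s (\det A).
Proof. by rewrite /conjT det_tr det_map_mx. Qed.

Variable n : nat.

Definition Jmx : 'M[F]_(n + n) := block_mx 0 1%:M 1%:M 0.

Definition isometry (g : 'M[F]_(n + n)) := g *m Jmx *m ct g = Jmx.

Definition vmx (k : 'M[F]_n) : 'M[F]_(n + n) := block_mx 1%:M k 0 1%:M.
Definition vTmx (k : 'M[F]_n) : 'M[F]_(n + n) := block_mx 1%:M 0 k 1%:M.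
Definition hmx (a : 'M[F]_n) : 'M[F]_(n + n) := block_mx (invmx a) 0 0 (ct a).

Lemma isometry_block (a b c d : 'M[F]_n) :
  isometry (block_mx a b c d) <->
  [/\ a *m ct d + b *m ct c = 1%:M, a *m ct b + b *m ct a = 0
    & c *m ct d + d *m ct c = 0].
Proof.
rewrite /isometry /Jmx conjT_block !mulmx_block !mulmx0 !mulmx1 !add0r !addr0.
split=> [/eq_block_mx[ab ad _ cd] | [ad ab cd]].
  by split; rewrite addrC.
rewrite (addrC (b *m ct a)) ab (addrC (b *m ct c)) ad (addrC (d *m ct c)) cd.
by rewrite -[d]conjTK -[c]conjTK -!conjTM -conjTD ad conjT1.
Qed.

Lemma inG_isometry g : inG s g <-> \det g = 1 /\ isometry g.
Proof.
have [gP Pg] := isometry_block (ulsubmx g) (ursubmx g) (dlsubmx g) (drsubmx g).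
rewrite submxK in gP Pg.
by rewrite /inG; split=> [[-> *] | [-> /gP[]]]; split=> //; apply: Pg.
Qed.

Lemma Jmx_invol : Jmx *m Jmx = 1%:M.
Proof.
by rewrite /Jmx mulmx_block !mulmx0 !mul0mx !mulmx1 !addr0 !add0r scalar_mx_block.
Qed.

Lemma isometry_rinv g : isometry g -> g *m (Jmx *m ct g *m Jmx) = 1%:M.
Proof. by move=> gJ; rewrite !mulmxA gJ Jmx_invol. Qed.

Lemma isometry_unit g : isometry g -> g \in unitmx.
Proof. by move/isometry_rinv/mulmx1_unit=> []. Qed.

Lemma isometry_conjT g : isometry g -> isometry (ct g).
Proof.
move/isometry_rinv/mulmx1C/(congr1 (mulmx Jmx)).
by rewrite /isometry conjTK !mulmxA Jmx_invol mul1mx mulmx1.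
Qed.

Lemma isometry_mul g h : isometry g -> isometry h -> isometry (g *m h).
Proof.
move=> gJ hJ; rewrite /isometry conjTM.
have -> : g *m h *m Jmx *m (ct h *m ct g) = g *m (h *m Jmx *m ct h) *m ct g.
  by rewrite !mulmxA.
by rewrite hJ.
Qed.

Lemma isometry_vmx k : ct k = - k -> isometry (vmx k).
Proof.
move=> kS; apply/isometry_block.
by rewrite kS conjT0 conjT1 ?(mulmx1, mulmx0, mul1mx, mul0mx, addr0, add0r, addNr).
Qed.

Lemma isometry_vTmx k : ct k = - k -> isometry (vTmx k).
Proof.
move=> kS; apply/isometry_block.
by rewrite kS conjT0 conjT1 ?(mulmx1, mulmx0, mul1mx, mul0mx, addr0, add0r, addNr, addrN).
Qed.

Lemma isometry_hmx a : a \in unitmx -> isometry (hmx a).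
Proof.
move=> ua; apply/isometry_block.
by rewrite conjTK conjT0 mulVmx ?(mulmx0, mul0mx, addr0).
Qed.

Lemma isometry_col_isotropic g : isometry g ->
  ct (ulsubmx g) *m dlsubmx g + ct (dlsubmx g) *m ulsubmx g = 0.
Proof.
move/isometry_conjT; rewrite -[in ct g](submxK g) conjT_block.
by case/isometry_block=> _; rewrite !conjTK.
Qed.

Lemma vmx_mul_block k (a b c d : 'M[F]_n) :
  vmx k *m block_mx a b c d = block_mx (a + k *m c) (b + k *m d) c d.
Proof. by rewrite /vmx mulmx_block !mul1mx !mul0mx !add0r. Qed.

Lemma vTmx_mul_block l (a b c d : 'M[F]_n) :
  vTmx l *m block_mx a b c d = block_mx a b (l *m a + c) (l *m b + d).
Proof. by rewrite /vTmx mulmx_block !mul1mx !mul0mx !addr0. Qed.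

Lemma hmx_mul_block u v (a b c d : 'M[F]_n) :
  hmx u *m block_mx a b c d *m hmx v =
  block_mx (invmx u *m a *m invmx v) (invmx u *m b *m ct v)
           (ct u *m c *m invmx v) (ct u *m d *m ct v).
Proof. by rewrite /hmx !mulmx_block !mulmx0 !mul0mx !addr0 !add0r. Qed.

Lemma det_vmx k : \det (vmx k) = 1.
Proof. by rewrite det_ublock !det1 mulr1. Qed.

Lemma det_vTmx l : \det (vTmx l) = 1.
Proof. by rewrite det_lblock !det1 mulr1. Qed.

Lemma det_hmx a : s =1 id -> a \in unitmx -> \det (hmx a) = 1.
Proof.
by move=> sid ua; rewrite det_ublock det_conjT sid det_inv mulVr -?unitmxE.
Qed.

Lemma isometry_ublock (a b d : 'M[F]_n) : isometry (block_mx a b 0 d) ->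
  [/\ a \in unitmx, ct (b *m ct a) = - (b *m ct a)
    & block_mx a b 0 d = vmx (b *m ct a) *m hmx (invmx a)].
Proof.
case/isometry_block; rewrite conjT0 mulmx0 addr0 => ad ab _.
have [ua _] := mulmx1_unit ad.
have da : ct (invmx a) = d by rewrite -[d]conjTK -[ct d](mulKmx ua) ad mulmx1.
split=> //; first by rewrite conjTM conjTK; apply/eqP; rewrite -addr_eq0 ab.
rewrite /hmx invmxK da mulmx_block !mulmx0 mul1mx mul0mx !addr0 add0r mul1mx.
by rewrite add0r -mulmxA -da -conjTM mulVmx // conjT1 mulmx1.
Qed.

Lemma det_isometry_ublock g : s =1 id -> isometry g -> dlsubmx g = 0 -> \det g = 1.
Proof.
move=> sid; rewrite -(submxK g) block_mxKdl => + g0; rewrite g0.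
case/isometry_ublock=> ua _ ->.
by rewrite det_mulmx det_vmx det_hmx ?unitmx_inv // mul1r.
Qed.

Definition compl_proj (D E : 'M[F]_n) := [/\ D *m D = D, E + D = 1%:M & ct D = D].

Section ComplementaryProjections.
Variables D E : 'M[F]_n.
Hypothesis DE_proj : compl_proj D E.

Let DD : D *m D = D. Proof. by case: DE_proj. Qed.
Let EDs : E + D = 1%:M. Proof. by case: DE_proj. Qed.
Let Dct : ct D = D. Proof. by case: DE_proj. Qed.
Let Edef : E = 1%:M - D. Proof. by rewrite -EDs addrK. Qed.
Let DE : D *m E = 0. Proof. by rewrite Edef mulmxBr mulmx1 DD subrr. Qed.
Let ED : E *m D = 0. Proof. by rewrite Edef mulmxBl mul1mx DD subrr. Qed.
Let EE : E *m E = E. Proof. by rewrite {2}Edef mulmxBr mulmx1 ED subr0. Qed.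
Let Ect : ct E = E. Proof. by rewrite Edef conjTD conjTN conjT1 Dct. Qed.

Definition swap_mx : 'M[F]_(n + n) := block_mx E D D E.

Lemma isometry_swap_mx : isometry swap_mx.
Proof. by apply/isometry_block; rewrite Dct Ect DD EE DE ED EDs addr0. Qed.

Lemma det_swap_mx : \det swap_mx = \det (E - D).
Proof.
have : vmx (- D) *m swap_mx *m vmx D = block_mx (E - D) 0 D 1%:M.
  rewrite vmx_mul_block /vmx mulmx_block !mulNmx DD DE !mulmx1 !mulmx0 !addr0 subr0.
  by rewrite mulmxBl ED DD sub0r addNr [D + E]addrC EDs.
move/(congr1 determinant); rewrite !det_mulmx !det_vmx mul1r mulr1 det_lblock det1.
by rewrite mulr1.
Qed.

Lemma isometry_ul_reduce g : isometry g -> dlsubmx g = D ->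
  exists2 k, ct k = - k & ulsubmx g - k *m D = E *m ulsubmx g *m E.
Proof.
move=> gJ gD; have := isometry_col_isotropic gJ; rewrite gD Dct.
set a := ulsubmx g => /eqP; rewrite addr_eq0 => /eqP aD.
have DaE : D *m a *m E = 0.
  by rewrite -[D *m a]opprK -aD mulNmx -mulmxA DE mulmx0 oppr0.
have Da : D *m a *m D = D *m a.
  by rewrite -[RHS]mulmx1 -EDs mulmxDr DaE add0r.
have EaDD : ct (E *m a *m D) *m D = 0.
  by rewrite !conjTM Dct Ect -!mulmxA ED !mulmx0.
(* [k D] must be the [D]-columns [D a D + E a D] of [a]; subtracting [(E a D)^*] makes [k]
   skew without changing [k D]. *)
exists (D *m a *m D + E *m a *m D - ct (E *m a *m D)).
  rewrite !conjTD conjTN conjTK [ct (D *m a *m D)]conjTM [ct (D *m a)]conjTM.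
  rewrite Dct -mulmxA aD mulmxN !mulmxA DD Da.
  by rewrite opprB opprD addrA (addrC (ct _)).
rewrite mulmxBl EaDD subr0 mulmxDl -!mulmxA DD !mulmxA Da.
rewrite -{1}[a]mul1mx -{1}[a]mulmx1 -EDs mulmxDl !mulmxDr !mulmxA DaE.
by apply/eqP; rewrite add0r Da subr_eq [D *m a + _]addrC addrA.
Qed.

Lemma unitmx_reduced_add g T : isometry g -> dlsubmx g = D ->
  D *m T = T -> (D <= T)%MS -> E *m ulsubmx g *m E + T \in unitmx.
Proof.
move=> gJ gD DT /submxP[S DST]; have [k _ aE] := isometry_ul_reduce gJ gD.
apply: unitmx_rker0 => x; set a := ulsubmx g => ex0.
have Tx : T *m x = 0.
  move: (congr1 (mulmx D) ex0); rewrite mulmx0 mulmxA mulmxDr !mulmxA DE !mul0mx.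
  by rewrite add0r DT.
have Dx : D *m x = 0 by rewrite DST -mulmxA Tx mulmx0.
have ax : a *m x = 0.
  rewrite -[a](subrK (k *m D)) mulmxDl aE -[k *m D *m x]mulmxA Dx mulmx0 addr0.
  by move: ex0; rewrite mulmxDl Tx addr0.
have : g *m col_mx x 0 = 0.
  by rewrite -[g]submxK mul_block_col gD ax Dx !mulmx0 !addr0 col_mx0.
move/(congr1 (mulmx (invmx g))); rewrite mulmxA mulVmx ?isometry_unit // mul1mx mulmx0.
by move/eqP; rewrite col_mx_eq0 => /andP[/eqP].
Qed.

Definition skew_full_on T := [/\ ct T = - T, D *m T = T, T *m D = T & (D <= T)%MS].

Lemma isometry_skew_unit_proj g T : isometry g -> dlsubmx g = D -> skew_full_on T ->
  exists2 k, ct k = - k & ulsubmx g - k *m D \in unitmx.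
Proof.
move=> gJ gD [Tsk DT TD DsT]; have [k0 k0sk aE] := isometry_ul_reduce gJ gD.
exists (k0 - T); first by rewrite conjTD conjTN k0sk Tsk opprK opprB addrC.
rewrite mulmxBl opprB addrCA aE TD addrC.
exact: unitmx_reduced_add.
Qed.

End ComplementaryProjections.

Lemma compl_proj_pid r : (r <= n)%N -> compl_proj (pid_mx r) (copid_mx r).
Proof.
by move=> rn; split; [apply: pid_mx_id | rewrite /copid_mx subrK | apply: conjT_pid].
Qed.

Lemma det_copid_sub_pid r : (r <= n)%N ->
  \det (copid_mx r - pid_mx r : 'M[F]_n) = (-1) ^+ r.
Proof.
move=> rn; have -> : copid_mx r - pid_mx r =
    diag_mx (\row_(i < n) if (i < r)%N then -1 else 1) :> 'M[F]_n.
  apply/matrixP=> i j; rewrite !mxE; case: (eqVneq i j) => [<- | ij].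
    by case: (i < r)%N; rewrite eqxx /= ?subrr ?sub0r ?subr0.
  by rewrite (inj_eq val_inj) (negPf ij) /= !subr0.
rewrite det_diag (eq_bigr (fun i : 'I_n => if (i < r)%N then -1 else 1)).
  by rewrite -big_mkcond -(big_ord_widen n (fun=> -1)) // prodr_const card_ord.
by move=> i _; rewrite mxE.
Qed.

Lemma isometry_pid_equiv g : isometry g -> exists u v,
  [/\ u \in unitmx, v \in unitmx & dlsubmx (hmx u *m g *m hmx v) = pid_mx (\rank (dlsubmx g))].
Proof.
move=> gJ; set c := dlsubmx g.
exists (ct (invmx (col_ebase c))), (row_ebase c).
rewrite unitmx_conjT unitmx_inv col_ebase_unit row_ebase_unit; split=> //.
rewrite -[g]submxK hmx_mul_block block_mxKdl conjTK -/c -{2}[c]mulmx_ebase.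
by rewrite -!mulmxA mulKmx ?col_ebase_unit // mulmxV ?row_ebase_unit // mulmx1.
Qed.

Lemma isometry_skew_unit g T : isometry g ->
  skew_full_on (pid_mx (\rank (dlsubmx g))) T ->
  exists2 k, ct k = - k & ulsubmx g - k *m dlsubmx g \in unitmx.
Proof.
move=> gJ Tr; have [u [v [uu uv g1D]]] := isometry_pid_equiv gJ.
have g1J := isometry_mul (isometry_mul (isometry_hmx uu) gJ) (isometry_hmx uv).
have [k1 k1sk] := isometry_skew_unit_proj (compl_proj_pid (rank_leq_row _)) g1J g1D Tr.
rewrite -g1D -[g in hmx u *m g]submxK hmx_mul_block block_mxKul block_mxKdl => k1u.
exists (u *m k1 *m ct u); first by rewrite !conjTM conjTK k1sk mulNmx mulmxN mulmxA.
have -> : ulsubmx g - u *m k1 *m ct u *m dlsubmx g =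
    u *m (invmx u *m ulsubmx g *m invmx v - k1 *m (ct u *m dlsubmx g *m invmx v)) *m v.
  by rewrite mulmxBr mulmxBl !mulmxA mulmxV // mul1mx !mulmxKV.
by rewrite !unitmx_mul uu uv k1u.
Qed.

Lemma det_isometry_id g : s =1 id -> isometry g -> \det g = (-1) ^+ \rank (dlsubmx g).
Proof.
move=> sid gJ; have [u [v [uu uv g1D]]] := isometry_pid_equiv gJ.
have rn := rank_leq_row (dlsubmx g); move: g1D rn; set r := \rank _ => g1D rn.
set g1 := hmx u *m g *m hmx v.
have g1J : isometry g1 := isometry_mul (isometry_mul (isometry_hmx uu) gJ) (isometry_hmx uv).
have detg1 : \det g1 = \det g by rewrite !det_mulmx !det_hmx // mul1r mulr1.
have [k0 k0sk aE] := isometry_ul_reduce (compl_proj_pid rn) g1J g1D.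
(* [vmx (- k0) *m g1] has blocks [E a E] and [D] in its first column, which [swap_mx]
   turns into [E a E + D] and [0]. *)
set g2 := swap_mx (pid_mx r) (copid_mx r) *m (vmx (- k0) *m g1).
have g2J : isometry g2.
  apply: isometry_mul; first exact: isometry_swap_mx (compl_proj_pid rn).
  by apply: isometry_mul g1J; apply: isometry_vmx; rewrite conjTN k0sk.
have g2dl : dlsubmx g2 = 0.
  rewrite /g2 -[g1]submxK vmx_mul_block g1D mulNmx aE /swap_mx mulmx_block block_mxKdl.
  by rewrite !mulmxA mul_pid_mx_copid // mul_copid_mx_pid // !mul0mx addr0.
have := det_isometry_ublock sid g2J g2dl.
rewrite /g2 det_mulmx (det_swap_mx (compl_proj_pid rn)) (det_copid_sub_pid rn).
rewrite det_mulmx det_vmx mul1r detg1 => h.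
by rewrite -[LHS](signrMK r) h mulr1.
Qed.

Lemma skew_full_on_scale r t : (r <= n)%N -> t != 0 -> s t = - t ->
  skew_full_on (pid_mx r) (t *: pid_mx r).
Proof.
move=> rn t0 st; split.
- by rewrite conjTZ conjT_pid st scaleNr.
- by rewrite -scalemxAr pid_mx_id.
- by rewrite -scalemxAl pid_mx_id.
- by rewrite (eqmx_scale _ t0).
Qed.

Definition partner (i : nat) := if odd i then i.-1 else i.+1.

Lemma odd_partner i : odd (partner i) = ~~ odd i.
Proof. by rewrite /partner; case: i => [|i] //=; case oi: (odd i); rewrite /= ?oi. Qed.

Lemma partnerK : involutive partner.
Proof.
move=> i; rewrite {1}/partner odd_partner /partner.
by case: i => [|i] //=; case oi: (odd i); rewrite /= ?oi.
Qed.

Lemma partner_lt r i : ~~ odd r -> (i < r)%N -> (partner i < r)%N.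
Proof.
rewrite /partner; case: (boolP (odd i)) => [_ _ ir | ei er ir].
  exact: leq_ltn_trans (leq_pred i) ir.
rewrite ltn_neqAle ir andbT; apply: contraNneq er => <-.
by rewrite /= ei.
Qed.

Lemma partner_sym r i j : ~~ odd r ->
  (j < r)%N && (i == partner j) = (i < r)%N && (j == partner i).
Proof.
move=> er; apply/andP/andP=> [[jr /eqP->] | [ir /eqP->]];
  by rewrite partnerK eqxx partner_lt.
Qed.

(* The standard symplectic form on the first [r] coordinates, pairing [2j] with [2j+1]. *)
Definition pair_mx r : 'M[F]_n :=
  \matrix_(i, j) (((i < r)%N && (j == partner i :> nat))%:R * (-1) ^+ odd i).

Lemma pid_mx_diag r : pid_mx r = diag_mx (\row_(i < n) ((i < r)%N)%:R) :> 'M[F]_n.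
Proof.
apply/matrixP=> i j; rewrite !mxE; case: (eqVneq i j) => [<- | ij].
  by rewrite eqxx mulr1n.
by rewrite (inj_eq val_inj) (negPf ij) mulr0n.
Qed.

Lemma pair_mx_sqr r : ~~ odd r -> (r <= n)%N -> pair_mx r *m pair_mx r = - pid_mx r.
Proof.
move=> er rn; apply/matrixP=> i j; rewrite !mxE.
have [ri | ir] := leqP r i.
  rewrite big1 => [|k _]; last by rewrite !mxE ltnNge ri !mul0r.
  by rewrite andbF oppr0.
have pi_n : (partner i < n)%N := leq_trans (partner_lt er ir) rn.
rewrite (bigD1 (Ordinal pi_n)) //= big1 => [|k ki]; last first.
  by move: ki; rewrite -val_eqE /= !mxE => /negPf->; rewrite andbF !mul0r.
rewrite !mxE /= ir partner_lt // partnerK eqxx odd_partner addr0 mul1r andbT.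
case: (eqVneq i j) => [<- | ij].
  by rewrite eqxx mul1r; case: (odd i); rewrite /= ?mulN1r ?mulr1 ?mul1r.
by rewrite !(inj_eq val_inj) [j == i]eq_sym (negPf ij) mul0r mulr0 oppr0.
Qed.

Lemma skew_full_on_pair r : ~~ odd r -> (r <= n)%N -> skew_full_on (pid_mx r) (pair_mx r).
Proof.
move=> er rn; split.
- apply/matrixP=> i j; rewrite !mxE rmorphM rmorph_nat rmorph_sign partner_sym //.
  case: (boolP (_ && _)) => [/andP[_ /eqP->] | _]; last by rewrite !mul0r oppr0.
  by rewrite odd_partner !mul1r; case: (odd i); rewrite ?opprK.
- apply/matrixP=> i j; rewrite pid_mx_diag mul_diag_mx !mxE.
  by case: (i < r)%N; rewrite ?mul1r ?mul0r.
- apply/matrixP=> i j; rewrite pid_mx_diag mul_mx_diag !mxE.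
  case: (boolP (_ && _)) => [/andP[ir /eqP->] | _]; last by rewrite !mul0r.
  by rewrite partner_lt // mulr1.
- by rewrite -[pid_mx r]opprK -pair_mx_sqr // -mulNmx submxMl.
Qed.

Definition in_VVTVH g := exists v1 w v2 h : 'M[F]_(n + n),
  [/\ inV s v1, inVT s w, inV s v2, inH s h /\ inG s h & g = v1 *m w *m v2 *m h].

Lemma in_VVTVH_inG g : in_VVTVH g -> inG s g.
Proof.
case=> _ [_ [_ [h [[k [ksk ->]] [l [lsk ->]] [k' [k'sk ->]] [_ /inG_isometry[dh hJ]] ->]]]].
rewrite -/(vmx k) -/(vTmx l) -/(vmx k'); apply/inG_isometry; split.
  by rewrite !det_mulmx !det_vmx det_vTmx !mul1r.
apply: isometry_mul hJ; apply: isometry_mul (isometry_vmx k'sk).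
exact: isometry_mul (isometry_vmx ksk) (isometry_vTmx lsk).
Qed.

Lemma isometry_unit_ul (a b c d : 'M[F]_n) : isometry (block_mx a b c d) -> a \in unitmx ->
  [/\ ct (c *m invmx a) = - (c *m invmx a), ct (b *m ct a) = - (b *m ct a)
    & block_mx a b c d = vTmx (c *m invmx a) *m vmx (b *m ct a) *m hmx (invmx a)].
Proof.
move=> gJ ua; set l := c *m invmx a.
have lsk : ct l = - l.
  have := isometry_col_isotropic gJ; rewrite block_mxKul block_mxKdl.
  move/eqP; rewrite addrC addr_eq0 => /eqP ca.
  rewrite /l conjTM conjT_invmx -[ct c](mulmxK ua) ca mulNmx mulmxN !mulmxA.
  by rewrite mulVmx ?unitmx_conjT // mul1mx.
have gE : block_mx a b c d = vTmx l *m block_mx a b 0 (d - l *m b).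
  by rewrite vTmx_mul_block addr0 /l mulmxKV // addrC subrK.
have g'J : isometry (block_mx a b 0 (d - l *m b)).
  have -> : block_mx a b 0 (d - l *m b) = vTmx (- l) *m block_mx a b c d.
    by rewrite vTmx_mul_block !mulNmx /l mulmxKV // addNr addrC.
  by apply: isometry_mul gJ; apply: isometry_vTmx; rewrite conjTN lsk.
have [_ k'sk g'E] := isometry_ublock g'J.
by split; rewrite // gE g'E mulmxA.
Qed.

Lemma in_VVTVH_skew_unit g k : inG s g -> ct k = - k ->
  ulsubmx g - k *m dlsubmx g \in unitmx -> in_VVTVH g.
Proof.
case/inG_isometry; rewrite -[g]submxK block_mxKul block_mxKdl.
move: (ulsubmx g) (ursubmx g) (dlsubmx g) (drsubmx g) => a b c d detg gJ ksk ua'.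
set a' := a - k *m c; set b' := b - k *m d.
have gE : block_mx a b c d = vmx k *m block_mx a' b' c d.
  by rewrite vmx_mul_block !subrK.
have g'J : isometry (block_mx a' b' c d).
  rewrite /a' /b' -!mulNmx -vmx_mul_block.
  by apply: isometry_mul gJ; apply: isometry_vmx; rewrite conjTN ksk.
have [lsk k'sk g'E] := isometry_unit_ul g'J ua'.
exists (vmx k), (vTmx (c *m invmx a')), (vmx (b' *m ct a')), (hmx (invmx a')).
split; [by exists k | by exists (c *m invmx a') | by exists (b' *m ct a') | | ].
- split; first by exists (invmx a'); rewrite unitmx_inv.
  apply/inG_isometry; split; last by apply: isometry_hmx; rewrite unitmx_inv.
  by move: detg; rewrite gE g'E !det_mulmx !det_vmx det_vTmx !mul1r.
by rewrite gE g'E !mulmxA.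
Qed.

End Isometry.

Theorem lemma4p2 (F : fieldType) (s : {rmorphism F -> F}) (n : nat)
  (hn : (3 <= n)%N)
  (hs : (forall x : F, s x = x) \/
        ((exists x : F, s x != x) /\ (forall x : F, s (s x) = x))) :
  forall g : 'M[F]_(n + n),
    inG s g <->
    exists v1 w v2 h : 'M[F]_(n + n),
      [/\ inV s v1, inVT s w, inV s v2, inH s h /\ inG s h &
          g = v1 *m w *m v2 *m h].
Proof.
have sK : involutive s by case: hs => [sid x | [_ sK] x]; rewrite ?sid.
move=> g; split=> [gG | ]; last exact (@in_VVTVH_inG _ _ sK _ g).
have [detg gJ] := (inG_isometry sK g).1 gG.
set r := \rank (dlsubmx g); have rn : (r <= n)%N := rank_leq_row _.
suff [T Tr] : exists T : 'M[F]_n, skew_full_on s (pid_mx r) T.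
  have [k ksk ku] := isometry_skew_unit sK gJ Tr.
  exact (in_VVTVH_skew_unit sK gG ksk ku).
have [[t t0 st] | er] : (exists2 t, t != 0 & s t = - t) \/ ~~ odd r.
- case: hs => [sid | [[x sx] _]]; last first.
    left; exists (x - s x); first by rewrite subr_eq0 eq_sym.
    by rewrite rmorphB sK opprB.
  have [two0 | two_neq0] := eqVneq (2%:R : F) 0.
    left; exists 1; rewrite ?oner_neq0 // rmorph1.
    by apply/eqP; rewrite -addr_eq0 -mulr2n two0.
  right; apply: contra two_neq0 => odd_r.
  by rewrite mulr2n -{2}detg (det_isometry_id sK sid gJ) -signr_odd odd_r subrr.
- by exists (t *: pid_mx r); apply: skew_full_on_scale.
- by exists (pair_mx F n r); apply: skew_full_on_pair.
Qed.
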